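(* Let $p$ be a prime and $k,\ell$ integers with $k>0$, $\ell\ge0$; put $q=p^k$ and $Q=p^{\ell}$. Let $c\in\mathbb{F}_{q^3}$ and define \[ f(X)=(X^q-X)^3+c^{q^2}X^{q^2Q}+c^qX^{qQ}+cX^{Q}, \] i.e. $f(X)=X^3\circ(X^q-X)+(X^{q^2}+X^q+X)\circ cX^Q$. Then $f(X)$ permutes $\mathbb{F}_{q^3}$ if and only if $q\equiv 2\pmod 3$ and $c^{q^2}+c^q+c\ne 0$.
   Context: A polynomial permutes $\mathbb{F}_{q^3}$ if the induced map $\mathbb{F}_{q^3}\to\mathbb{F}_{q^3}$ is a bijection. *)

From mathcomp Require Import all_boot all_order all_algebra all_field.
Set Implicit Arguments. Unset Strict Implicit. Unset Printing Implicit Defensive.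
Import GRing.Theory.
Local Open Scope ring_scope.

Definition f_poly (F : comNzRingType) (q Q : nat) (c : F) : {poly F} :=
  ('X^q - 'X) ^+ 3 + (c ^+ (q ^ 2)%N)%:P * 'X^(q ^ 2 * Q)
  + (c ^+ q)%:P * 'X^(q * Q) + c%:P * 'X^Q.

Definition permutes_poly (F : finFieldType) (P : {poly F}) : Prop :=
  bijective (fun x : F => P.[x]).

From mathcomp Require Import all_boot all_order all_algebra all_field.
From mathcomp Require Import zify ring.
Set Implicit Arguments. Unset Strict Implicit. Unset Printing Implicit Defensive.
Import GRing.Theory.
Local Open Scope ring_scope.

(* Write sigma x = x^q, Tr = sigma^2 + sigma + 1 and L x = sigma x - x, so that
   f(x) = L(x)^3 + Tr(c x^Q) and f(x + a) = f(x) + a^Q Tr(c) for a in F_q; hence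
   Tr(c) <> 0 is necessary.  If 3 | q, cubing is additive and Tr o f = 0, so f is
   not onto.  If q = 1 (mod 3), F_q contains a cube root of unity w <> 1; then
   L(w x)^3 = L(x)^3, so f(x) - f(w x) lies in F_q and a translate of w x by F_q
   collides with x.  If q = 2 (mod 3), cubing is injective on F_(q^3).  Every
   y = L(x) has trace 0, so y^3 + e2(y) y = N(y) with e2(y), N(y) in F_q; thus
   f(x) = f(x') makes e2(y) y - e2(y') y' an element of F_q of trace 0, i.e. 0.
   This forces y = y' (the ratio e2(y) / e2(y') lies in F_q and its cube is 1),
   so x - x' lies in F_q and the translation formula gives x = x'. *)

Lemma size_XnsubX (R : nzRingType) n : (1 < n)%N -> size ('X^n - 'X : {poly R}) = n.+1.
Proof. by move=> n_gt1; rewrite size_polyDl size_polyXn // size_polyN size_polyX. Qed.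

Section FinField.
Variable F : finFieldType.

Lemma exists_nonroot (P : {poly F}) :
  P != 0 -> (size P <= #|F|)%N -> exists x, ~~ root P x.
Proof.
move=> P0 szP; apply/existsP; rewrite -negb_forall; apply/forallP => rootsP.
have /max_poly_roots : all (root P) (enum F) by apply/allP => x _; apply: rootsP.
by move=> /(_ P0 (enum_uniq _)); rewrite -cardE ltnNge szP.
Qed.

Lemma cubef_inj : (#|F| %% 3 = 2)%N -> injective (fun x : F => x ^+ 3).
Proof.
move=> F_mod3; pose m := (#|F| %/ 3)%N.
have cube_root (x : F) : (x ^+ 3) ^+ (2 * m + 1) = x.
  have : (3 * (2 * m + 1) = #|F| + #|F|.-1)%N.
    by have := finNzRing_gt1 F; rewrite [in RHS](divn_eq #|F| 3) F_mod3 -/m; lia.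
  rewrite -exprM => ->; rewrite exprD expf_card -[in RHS](expf_card x).
  by rewrite -{2}(ltn_predK (finNzRing_gt1 F)) exprS.
by move=> x y /= /(congr1 (fun z => z ^+ (2 * m + 1))); rewrite !cube_root.
Qed.

Lemma exists_cube_root1 : (#|F| %% 3 = 1)%N -> exists2 w : F, w ^+ 3 = 1 & w != 1.
Proof.
move=> F_mod3; pose m := (#|F| %/ 3)%N.
have F_eq : #|F| = (3 * m).+1.
  by rewrite [LHS](divn_eq #|F| 3) F_mod3 -/m; lia.
have m_gt0 : (0 < m)%N.
  by have := finNzRing_gt1 F; rewrite F_eq; case: (m).
have szP : size ('X^(m.+1) - 'X : {poly F}) = m.+2 by rewrite size_XnsubX.
have [x] : exists x : F, ~~ root ('X^(m.+1) - 'X) x.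
  by apply: exists_nonroot; rewrite -?size_poly_eq0 szP // F_eq; lia.
rewrite rootE !hornerE subr_eq0 => xm1_neq_x.
have x_neq0 : x != 0 by apply: contraNneq xm1_neq_x => ->; rewrite expr0n.
exists (x ^+ m); last by apply: contraNneq xm1_neq_x => xm1; rewrite exprSr xm1 mul1r.
apply: (mulIf x_neq0); rewrite mul1r -exprM -exprSr mulnC -F_eq.
exact: expf_card.
Qed.

End FinField.

Section Frobenius.
Variables (F : fieldType) (p : nat).

Definition frob n (x : F) := x ^+ (p ^ n).

Lemma frobM n : {morph frob n : x y / x * y}.
Proof. by move=> x y; rewrite /frob exprMn. Qed.

Lemma frobV n : {morph frob n : x / x^-1}.
Proof. by move=> x; rewrite /frob exprVn. Qed.

Lemma frobX n x m : frob n (x ^+ m) = frob n x ^+ m.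
Proof. exact: exprAC. Qed.

Lemma frobC m n x : frob m (frob n x) = frob n (frob m x).
Proof. exact: exprAC. Qed.

Hypothesis pcharFp : p \in [pchar F].

Lemma pchar_nat_pX n : [pchar F].-nat (p ^ n)%N.
Proof.
by rewrite (eq_pnat _ (pcharf_eq pcharFp)) pnatX pnat_id ?(pcharf_prime pcharFp).
Qed.

Lemma frobD n : {morph frob n : x y / x + y}.
Proof. by move=> x y; apply: exprDn_pchar; apply: pchar_nat_pX. Qed.

Lemma frobN n : {morph frob n : x / - x}.
Proof. by move=> x; apply: exprNn_pchar; apply: pchar_nat_pX. Qed.

Lemma frobB n : {morph frob n : x y / x - y}.
Proof. by move=> x y; rewrite frobD frobN. Qed.

Lemma frob_inj n : injective (frob n).
Proof.
move=> x y /eqP; rewrite -subr_eq0 -frobB /frob expf_eq0 subr_eq0.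
by case/andP=> _ /eqP.
Qed.

End Frobenius.

Section CubicExtension.
Variables (F : finFieldType) (p k : nat).
Hypotheses (p_pr : prime p) (card_F : #|F| = ((p ^ k) ^ 3)%N).

Local Notation q := (p ^ k)%N.

Lemma pchar_F : p \in [pchar F].
Proof. by apply: (@card_finPcharP F p (k * 3)); rewrite // expnM. Qed.

Lemma q_gt1 : (1 < q)%N.
Proof. by have := finNzRing_gt1 F; rewrite card_F; case: q => [|[|n]]. Qed.

Lemma natf3_eq0 : (3%:R == 0 :> F) = (3 %| q)%N.
Proof.
have k_gt0 : (0 < k)%N by rewrite lt0n; apply: contraTneq q_gt1 => ->.
by rewrite -(dvdn_pcharf pchar_F) Euclid_dvdX // k_gt0 andbT !dvdn_prime2 // eq_sym.
Qed.

Local Notation sigma := (@frob F p k).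

Lemma sigmaK3 x : sigma (sigma (sigma x)) = x.
Proof.
by rewrite /frob -!exprM -[RHS]expf_card card_F !expnS expn0 muln1.
Qed.

(* The fixed field of [sigma] is F_q; [tr], [esym2] and [nrm] are the coefficients
   of the characteristic polynomial over F_q. *)
Definition tr x := sigma (sigma x) + sigma x + x.
Definition nrm x := x * sigma x * sigma (sigma x).
Definition esym2 x := x * sigma x + sigma x * sigma (sigma x) + sigma (sigma x) * x.
Definition delta x := sigma x - x.

Lemma trE x : tr x = x ^+ (q ^ 2) + x ^+ q + x.
Proof. by rewrite /tr /frob -exprM mulnn. Qed.

Lemma sigma_tr x : sigma (tr x) = tr x.
Proof. by rewrite /tr !(frobD pchar_F) /= sigmaK3; ring. Qed.

Lemma sigma_nrm x : sigma (nrm x) = nrm x.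
Proof. by rewrite /nrm !frobM sigmaK3; ring. Qed.

Lemma sigma_esym2 x : sigma (esym2 x) = esym2 x.
Proof. by rewrite /esym2 !(frobD pchar_F) !frobM sigmaK3; ring. Qed.

Lemma trD x y : tr (x + y) = tr x + tr y.
Proof. by rewrite /tr !(frobD pchar_F); ring. Qed.

Lemma trB x y : tr (x - y) = tr x - tr y.
Proof. by rewrite /tr !(frobB pchar_F); ring. Qed.

Lemma trMl a x : sigma a = a -> tr (a * x) = a * tr x.
Proof. by move=> fix_a; rewrite /tr !frobM !fix_a; ring. Qed.

Lemma tr_fixed a : sigma a = a -> tr a = 3%:R * a.
Proof. by move=> fix_a; rewrite /tr !fix_a; ring. Qed.

Lemma tr_delta x : tr (delta x) = 0.
Proof. by rewrite /tr /delta !(frobB pchar_F) sigmaK3; ring. Qed.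

Lemma esym2Ml a x : sigma a = a -> esym2 (a * x) = a ^+ 2 * esym2 x.
Proof. by move=> fix_a; rewrite /esym2 !frobM !fix_a; ring. Qed.

Lemma cubic_tr0 y : tr y = 0 -> y ^+ 3 + esym2 y * y = nrm y.
Proof.
move=> tr_y0; have sigma2y : sigma (sigma y) = - (sigma y + y).
  by apply/eqP; rewrite -addr_eq0 addrA; apply/eqP.
by rewrite /esym2 /nrm sigma2y; ring.
Qed.

Lemma delta_eq0 x : (delta x == 0) = (sigma x == x).
Proof. exact: subr_eq0. Qed.

Lemma deltaB x y : delta (x - y) = delta x - delta y.
Proof. by rewrite /delta (frobB pchar_F); ring. Qed.

Lemma deltaDr x a : sigma a = a -> delta (x + a) = delta x.
Proof. by move=> fix_a; rewrite /delta (frobD pchar_F) fix_a; ring. Qed.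

Lemma fixed_frob l a : sigma a = a -> sigma (frob p l a) = frob p l a.
Proof. by move=> fix_a; rewrite frobC fix_a. Qed.

Section InjectiveCase.
Hypothesis q_mod3 : (q %% 3 = 2)%N.

Lemma card_F_mod3 : (#|F| %% 3 = 2)%N.
Proof. by rewrite card_F -modnXm q_mod3. Qed.

Lemma fixed_tr0_eq0 a : sigma a = a -> tr a = 0 -> a = 0.
Proof.
have nz3 : 3%:R != 0 :> F by rewrite natf3_eq0 /dvdn q_mod3.
by move=> fix_a; rewrite tr_fixed // => /eqP; rewrite mulf_eq0 (negbTE nz3) => /eqP.
Qed.

Lemma fixed_of_fixed_cube y : sigma (y ^+ 3) = y ^+ 3 -> sigma y = y.
Proof. by rewrite frobX => /(cubef_inj card_F_mod3). Qed.

Lemma esym2_tr0_eq0 y : tr y = 0 -> esym2 y = 0 -> y = 0.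
Proof.
move=> tr_y0 esym2_y0; have := cubic_tr0 tr_y0.
rewrite esym2_y0 mul0r addr0 => y3.
by apply: fixed_tr0_eq0 tr_y0; apply: fixed_of_fixed_cube; rewrite y3 sigma_nrm.
Qed.

Lemma esym2_mul_tr0_eq0 y : tr y = 0 -> (esym2 y * y == 0) = (y == 0).
Proof.
move=> tr_y0; apply/idP/idP => [|/eqP ->]; last by rewrite mulr0.
by rewrite mulf_eq0 => /orP[/eqP/(esym2_tr0_eq0 tr_y0) -> |].
Qed.

Lemma esym2_mul_tr0_inj y y' :
  tr y = 0 -> tr y' = 0 -> esym2 y * y = esym2 y' * y' -> y = y'.
Proof.
move=> tr_y0 tr_y'0 eq_yy'.
have [y0 | nz_y] := eqVneq y 0.
  by move/esym/eqP: eq_yy'; rewrite y0 mulr0 esym2_mul_tr0_eq0 // => /eqP ->.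
have nz_y' : y' != 0.
  by apply: contra nz_y => /eqP y'0; rewrite -esym2_mul_tr0_eq0 // eq_yy' y'0 mulr0.
have nz_esym2 u : tr u = 0 -> u != 0 -> esym2 u != 0.
  by move=> tr_u0; apply: contra => /eqP/(esym2_tr0_eq0 tr_u0) ->.
pose r := esym2 y / esym2 y'.
have fix_r : sigma r = r by rewrite frobM frobV !sigma_esym2.
have y'E : y' = r * y.
  apply: (mulfI (nz_esym2 _ tr_y'0 nz_y')).
  by rewrite -eq_yy' /r; field; apply: nz_esym2.
have r3 : r ^+ 3 = 1 ^+ 3.
  apply: (mulIf (_ : esym2 y * y != 0)); first by rewrite esym2_mul_tr0_eq0.
  by rewrite expr1n mul1r {2}eq_yy' y'E esym2Ml //; ring.
by rewrite y'E (cubef_inj card_F_mod3 r3) mul1r.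
Qed.

Lemma tr0_eq_of_fixed_cubeB y y' : tr y = 0 -> tr y' = 0 ->
  sigma (y ^+ 3 - y' ^+ 3) = y ^+ 3 - y' ^+ 3 -> y = y'.
Proof.
move=> tr_y0 tr_y'0 fix_cubeB; apply: esym2_mul_tr0_inj => //.
apply/eqP; rewrite -subr_eq0; apply/eqP; apply: fixed_tr0_eq0.
  rewrite (_ : _ - _ = nrm y - nrm y' - (y ^+ 3 - y' ^+ 3)).
    by rewrite (frobB pchar_F) fix_cubeB (frobB pchar_F) !sigma_nrm.
  by rewrite -(cubic_tr0 tr_y0) -(cubic_tr0 tr_y'0); ring.
by rewrite trB !trMl ?sigma_esym2 // tr_y0 tr_y'0 !mulr0 subr0.
Qed.

End InjectiveCase.

Lemma exists_tr_neq0 : exists z, tr z != 0.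
Proof.
have q_lt_q2 : (q < q ^ 2)%N by rewrite -{1}(expn1 q) ltn_exp2l ?q_gt1.
have szP : size ('X^(q ^ 2) + 'X^q + 'X : {poly F}) = (q ^ 2).+1.
  rewrite -addrA size_polyDl size_polyXn // size_polyDl size_polyXn ?ltnS //.
  by rewrite size_polyX; apply: q_gt1.
have [z] : exists z : F, ~~ root ('X^(q ^ 2) + 'X^q + 'X) z.
  by apply: exists_nonroot; rewrite -?size_poly_eq0 szP // card_F ltn_exp2l ?q_gt1.
by rewrite rootE !hornerE -trE; exists z.
Qed.

Lemma exists_nonfixed : exists x, sigma x != x.
Proof.
have [x] : exists x : F, ~~ root ('X^q - 'X) x.
  apply: exists_nonroot; rewrite -?size_poly_eq0 size_XnsubX ?q_gt1 // card_F.
  by rewrite -{1}(expn1 q) ltn_exp2l ?q_gt1.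
by rewrite rootE !hornerE subr_eq0; exists x.
Qed.

Section Polynomial.
Variables (l : nat) (c : F).
Local Notation f := (f_poly q (p ^ l)%N c).

Lemma horner_f x : f.[x] = delta x ^+ 3 + tr (c * frob p l x).
Proof.
rewrite trE /f_poly !hornerE /delta /frob !exprMn -!exprM.
by rewrite [(q ^ 2 * _)%N]mulnC [(q * _)%N]mulnC.
Qed.

Lemma horner_f_shift x a : sigma a = a -> f.[x + a] = f.[x] + frob p l a * tr c.
Proof.
move=> fix_a; rewrite !horner_f deltaDr // (frobD pchar_F) mulrDr trD.
by rewrite [c * frob p l a]mulrC (trMl _ (fixed_frob l fix_a)); ring.
Qed.

Lemma sigma_horner_f_sub x : sigma (f.[x] - delta x ^+ 3) = f.[x] - delta x ^+ 3.
Proof. by rewrite horner_f addrAC subrr add0r sigma_tr. Qed.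

Lemma f_inj_mod3_2 : (q %% 3 = 2)%N -> tr c != 0 -> injective (fun x => f.[x]).
Proof.
move=> q_mod3 nz_trc x x' /= eq_f.
have fix_xB : sigma (x - x') = x - x'.
  apply/eqP; rewrite -delta_eq0 deltaB subr_eq0; apply/eqP.
  apply: (tr0_eq_of_fixed_cubeB q_mod3); rewrite ?tr_delta //.
  have -> : delta x ^+ 3 - delta x' ^+ 3
            = (f.[x'] - delta x' ^+ 3) - (f.[x] - delta x ^+ 3) by rewrite eq_f; ring.
  by rewrite (frobB pchar_F) !sigma_horner_f_sub.
have := horner_f_shift x' fix_xB; rewrite addrC subrK eq_f => /eqP.
rewrite -subr_eq0 opprD addrA subrr add0r oppr_eq0 mulf_eq0 (negbTE nz_trc) orbF.
by rewrite (frobB pchar_F) subr_eq0 => /eqP/(frob_inj pchar_F).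
Qed.

Lemma f_inj_tr_neq0 : injective (fun x => f.[x]) -> tr c != 0.
Proof.
move=> f_inj; apply/eqP => trc0; have := horner_f_shift 0 (expr1n F q).
by rewrite trc0 mulr0 addr0 add0r => /f_inj/eqP; rewrite oner_eq0.
Qed.

Lemma f_not_bij_dvd3 : (3 %| q)%N -> ~ bijective (fun x => f.[x]).
Proof.
move=> q_div3 [g _ gK].
have pchar3 : 3 \in [pchar F] by rewrite inE natf3_eq0 q_div3.
have cubeD (u v : F) : (u + v) ^+ 3 = u ^+ 3 + v ^+ 3.
  by apply: exprDn_pchar; rewrite (eq_pnat _ (pcharf_eq pchar3)) pnat_id.
have tr_cube (u : F) : tr (u ^+ 3) = tr u ^+ 3 by rewrite /tr !cubeD -!frobX.
have tr_f x : tr f.[x] = 0.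
  rewrite horner_f trD tr_cube tr_delta (tr_fixed (sigma_tr _)).
  by rewrite (pcharf0 pchar3) mul0r expr0n addr0.
by have [z] := exists_tr_neq0; rewrite -[z]gK tr_f eqxx.
Qed.

Lemma f_not_inj_mod3_1 : (q %% 3 = 1)%N -> tr c != 0 -> ~ injective (fun x => f.[x]).
Proof.
move=> q_mod3 nz_trc f_inj.
have [w w3 w_neq1] : exists2 w : F, w ^+ 3 = 1 & w != 1.
  by apply: exists_cube_root1; rewrite card_F -modnXm q_mod3.
have fix_w : sigma w = w by rewrite /frob -(expr_mod _ w3) q_mod3.
have [x1 nfix_x1] := exists_nonfixed.
pose x2 := w * x1.
have delta_x2 : delta x2 = w * delta x1 by rewrite /delta /x2 frobM fix_w; ring.
pose d := f.[x1] - f.[x2].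
have fix_d : sigma (d / tr c) = d / tr c.
  rewrite frobM frobV sigma_tr; congr (_ / _).
  have -> : d = (f.[x1] - delta x1 ^+ 3) - (f.[x2] - delta x2 ^+ 3).
    by rewrite delta_x2 exprMn w3 mul1r /d; ring.
  by rewrite (frobB pchar_F) !sigma_horner_f_sub.
have [root _ rootK] := injF_bij (frob_inj pchar_F (n := l)).
pose a := root (d / tr c).
have fix_a : sigma a = a.
  by apply: (frob_inj pchar_F (n := l)); rewrite frobC /a rootK fix_d.
have := horner_f_shift x2 fix_a; rewrite /a rootK divfK // /d [RHS]addrC subrK.
move=> /f_inj /(congr1 delta); rewrite deltaDr // delta_x2 => /eqP.
rewrite -subr_eq0 -{2}(mul1r (delta x1)) -mulrBl mulf_eq0 subr_eq0 (negbTE w_neq1) /=.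
by rewrite delta_eq0 (negbTE nfix_x1).
Qed.

End Polynomial.

End CubicExtension.

Theorem theorem1p8 (F : finFieldType) (p k l : nat) (c : F) :
  prime p -> (0 < k)%N -> #|F| = ((p ^ k) ^ 3)%N ->
  permutes_poly (f_poly (p ^ k)%N (p ^ l)%N c) <->
  ((p ^ k) %% 3 = 2)%N /\ c ^+ ((p ^ k) ^ 2)%N + c ^+ (p ^ k)%N + c != 0.
Proof.
(* [0 < k] follows from [1 < #|F|]. *)
move=> p_pr _ card_F; rewrite -(trE p k) /permutes_poly.
split=> [f_bij | [q_mod3 nz_trc]]; last exact/injF_bij/(f_inj_mod3_2 p_pr card_F).
have f_inj := bij_inj f_bij; have nz_trc := f_inj_tr_neq0 p_pr card_F f_inj.
split=> //; have := ltn_mod (p ^ k) 3.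
case q_mod3 : (p ^ k %% 3)%N => [|[|[|//]]] _ //.
- by case: (f_not_bij_dvd3 p_pr card_F _ f_bij); rewrite /dvdn q_mod3.
- by case: (f_not_inj_mod3_1 p_pr card_F q_mod3 nz_trc f_inj).
Qed.
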